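(* Let $S$ be an additive numerical semigroup with multiplicity $e$ whose blowup $B$ equals $\mathbb N$ (equivalently, $a_1-e=1$). Then ${\rm d}_{\max}(S)=d(e-1;B^{\mathcal D})$.
   Context: $S$ is a numerical semigroup (a submonoid of $\mathbb N$ with finite complement) with minimal generators $e<a_1<\dots<a_t$. An $S$-factorization of $n$ is $(c_0,\dots,c_t)\in\mathbb N^{t+1}$ with $c_0e+\sum c_ia_i=n$, of length $\sum c_i$. ${\rm ord}(n;S)$ is the maximal such length, ${\rm d}_{\max}(n;S)$ is the number of factorizations of maximal length, and ${\rm d}_{\max}(S)=\max_{n\in S}{\rm d}_{\max}(n;S)$. $S$ is additive if ${\rm ord}(u+e;S)={\rm ord}(u;S)+1$ for all $u\in S$. The blowup is $B=\langle e,d_1,\dots,d_t\rangle$ with $d_i=a_i-e$, and $\mathcal D=(e,d_1,\dots,d_t)$. $d(b;B^{\mathcal D})$ is the number of tuples $(x_0,\dots,x_t)\in\mathbb N^{t+1}$ with $x_0e+\sum x_id_i=b$. *)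

From mathcomp Require Import all_boot.
Set Implicit Arguments. Unset Strict Implicit. Unset Printing Implicit Defensive.

(* A numerical semigroup is given by its list of minimal generators
   s = [:: e; a_1; ...; a_t] (strictly increasing). Entry i of s is nth 0 s i. *)

Definition in_monoid (s : seq nat) (n : nat) : Prop :=
  exists c : 'I_(size s) -> nat, \sum_(i < size s) c i * nth 0 s i = n.

(* All tuples (c_0,...,c_t) with sum c_i s_i = n.  When every entry of s is
   positive, each c_i <= n, so coefficients in 'I_n.+1 capture all of them. *)
Definition factorizations (s : seq nat) (n : nat)
  : {set {ffun 'I_(size s) -> 'I_n.+1}} :=
  [set c : {ffun 'I_(size s) -> 'I_n.+1} | \sum_(i < size s) (c i : nat) * nth 0 s i == n].

Definition flen (k m : nat) (c : {ffun 'I_k -> 'I_m}) : nat :=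
  \sum_(i < k) (c i : nat).

Definition ord_len (s : seq nat) (n : nat) : nat :=
  \max_(c in factorizations s n) flen c.

Definition dmax_n (s : seq nat) (n : nat) : nat :=
  #|[set c in factorizations s n | flen c == ord_len s n]|.

Definition numsg_mingens (s : seq nat) : Prop :=
  [/\ sorted ltn s, 0 \notin s,
      (exists F, forall n, F <= n -> in_monoid s n) &
      forall a, a \in s -> ~ in_monoid (filter (predC1 a) s) a].

Definition multiplicity (s : seq nat) : nat := head 0 s.

Definition additive (s : seq nat) : Prop :=
  forall u, in_monoid s u -> ord_len s (u + multiplicity s) = (ord_len s u).+1.

(* the tuple D = (e, d_1, ..., d_t), d_i = a_i - e; B is the monoid it generates *)
Definition blowup_gens (s : seq nat) : seq nat :=
  multiplicity s :: [seq a - multiplicity s | a <- behead s].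

Definition d_count (D : seq nat) (b : nat) : nat := #|factorizations D b|.

From mathcomp Require Import all_boot zify.
Set Implicit Arguments. Unset Strict Implicit. Unset Printing Implicit Defensive.

(* Write d_i = a_i - e, so that a factorization c of n has
   n = e * len(c) + sum_(i>0) c_i d_i.  Since B = N, every r < e is a combination
   of the d_i; turning such a combination of r = n mod e into a factorization of
   n + r e of length n div e + r and using additivity gives ord(n) = n div e on S.
   So a maximal factorization of n is determined by c_1..c_t, a combination of the
   d_i with value n mod e.  Factorizations of e - 1 in B^D never use e; padding by
   a fixed combination of e - 1 - (n mod e) gives d_max(n) <= d(e-1; B^D), and
   for n = e^2 - 1 every combination of e - 1 extends to a maximal factorization. *)

Lemma leq_card_in_map (T T' : finType) (A : {set T}) (B : {set T'}) (f : T -> T') :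
  {in A, forall x, f x \in B} -> {in A &, injective f} -> #|A| <= #|B|.
Proof.
move=> fAB f_inj; rewrite -(card_in_imset f_inj).
by apply/subset_leq_card/subsetP => _ /imsetP[x Ax ->]; apply: fAB.
Qed.

Lemma leq_sum_term k (x : 'I_k -> nat) i : x i <= \sum_j x j.
Proof. by rewrite (bigD1 i) //= leq_addr. Qed.

Lemma eq_ord0_sum k (x y : 'I_k.+1 -> nat) :
  (forall i, i != ord0 -> x i = y i) -> \sum_i x i = \sum_i y i -> x ord0 = y ord0.
Proof.
move=> xy; rewrite (bigD1 ord0) // [RHS](bigD1 ord0) //= (eq_bigr _ xy).
by move/eqP; rewrite eqn_add2r => /eqP.
Qed.

Lemma ffun_eq_off_ord0 k m (c1 c2 : {ffun 'I_k.+1 -> 'I_m}) :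
  (forall i, i != ord0 -> c1 i = c2 i :> nat) -> flen c1 = flen c2 -> c1 = c2.
Proof.
move=> c12 len12; have c120 := eq_ord0_sum c12 len12.
by apply/ffunP => i; apply/val_inj; case: (eqVneq i ord0) => [->|/c12].
Qed.

Definition wfactorizations k (w : nat -> nat) n : {set {ffun 'I_k -> 'I_n.+1}} :=
  [set c : {ffun 'I_k -> 'I_n.+1} | \sum_i (c i : nat) * w i == n].

Lemma card_factorizations_size t k n :
  size t = k -> #|factorizations t n| = #|wfactorizations k (nth 0 t) n|.
Proof. by move=> <-. Qed.

Lemma in_monoid_size t k n :
  size t = k -> in_monoid t n -> exists x : 'I_k -> nat, \sum_i x i * nth 0 t i = n.
Proof. by move=> <-. Qed.

Section WeightedFactorizations.

Variables (k : nat) (w : nat -> nat).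
Hypothesis w_gt0 : forall i : 'I_k, 0 < w i.

Definition coef_ffun n (x : 'I_k -> nat) : {ffun 'I_k -> 'I_n.+1} :=
  [ffun i => inord (x i)].

Lemma coef_ffunE n (x : 'I_k -> nat) i : \sum_j x j * w j = n -> coef_ffun n x i = x i :> nat.
Proof.
move=> <-; rewrite ffunE inordK // ltnS.
apply: leq_trans (leq_sum_term (fun j => x j * w j) i).
by rewrite leq_pmulr.
Qed.

Lemma coef_ffun_in n (x : 'I_k -> nat) : \sum_j x j * w j = n -> coef_ffun n x \in wfactorizations k w n.
Proof.
move=> xn; rewrite inE -[X in _ == X]xn; apply/eqP/eq_bigr => i _.
by rewrite (coef_ffunE _ xn).
Qed.

Lemma coef_ffun_inj n (x y : 'I_k -> nat) : \sum_j x j * w j = n -> \sum_j y j * w j = n ->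
  coef_ffun n x = coef_ffun n y -> x =1 y.
Proof. by move=> xn yn xy i; rewrite -(coef_ffunE i xn) -(coef_ffunE i yn) xy. Qed.

End WeightedFactorizations.

Section AdditiveWithFullBlowup.

Variables (e : nat) (A : seq nat).
Local Notation s := (e :: A).
Local Notation k := (size A).+1.
Local Notation w := (nth 0 s).
Local Notation d i := (nth 0 s i - e).
Local Notation D := (blowup_gens s).

Hypothesis e_gt0 : 0 < e.
Hypothesis e_lt_A : all (ltn e) A.

Lemma w_ge (i : 'I_k) : e <= w i.
Proof.
case: i => [[|i]] //= /[!ltnS] iA; apply/ltnW/(allP e_lt_A).
exact: mem_nth.
Qed.

Lemma w_gt0 (i : 'I_k) : 0 < w i.
Proof. exact: leq_trans e_gt0 (w_ge i). Qed.

Lemma d_gt0 (i : 'I_k) : i != ord0 -> 0 < d i.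
Proof.
case: i => [[|i]] //= /[!ltnS] iA _; rewrite subn_gt0; apply/(allP e_lt_A).
exact: mem_nth.
Qed.

Lemma nth_blowup_gens i : nth 0 D i = if i == 0 then e else d i.
Proof.
case: i => [|i] //=; have [iA|Ai] := ltnP i (size A).
  by rewrite (nth_map 0).
by rewrite !nth_default ?size_map.
Qed.

Lemma blowup_weights_gt0 (i : 'I_k) : 0 < nth 0 D i.
Proof.
by rewrite nth_blowup_gens; case: eqP => [//|/eqP i0]; apply: d_gt0.
Qed.

Lemma sum_w_split (x : 'I_k -> nat) :
  \sum_i x i * w i = e * \sum_i x i + \sum_i x i * d i.
Proof.
rewrite big_distrr -big_split; apply: eq_bigr => i _.
by rewrite /= mulnBr (mulnC e) subnKC // leq_mul2l w_ge orbT.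
Qed.

Lemma sum_blowup_split (x : 'I_k -> nat) :
  \sum_i x i * nth 0 D i = x ord0 * e + \sum_i x i * d i.
Proof.
rewrite (bigD1 ord0) // [X in _ = _ + X](bigD1 ord0) //= subnn muln0.
by congr (_ + _); apply: eq_bigr => i i0; rewrite nth_blowup_gens ifN.
Qed.

Lemma sum_le_sum_d (x : 'I_k -> nat) : x ord0 = 0 -> \sum_i x i <= \sum_i x i * d i.
Proof.
move=> x0; apply: leq_sum => i _.
by case: (eqVneq i ord0) => [->|i0]; rewrite ?x0 // leq_pmulr ?d_gt0.
Qed.

Lemma sum_blowup_small (x : 'I_k -> nat) b : b < e ->
  (\sum_i x i * nth 0 D i == b) = (x ord0 == 0) && (\sum_i x i * d i == b).
Proof.
move=> be; rewrite sum_blowup_split; case: (x ord0) => [|m] //=.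
by apply/negbTE; rewrite neq_ltn orbC mulSn -addnA (leq_trans be) ?leq_addr.
Qed.

Definition fill_ord0 q (x : 'I_k -> nat) i := if i == ord0 then q - \sum_j x j else x i.

Lemma sum_fill_ord0 q (x : 'I_k -> nat) : x ord0 = 0 -> \sum_i x i <= q -> \sum_i fill_ord0 q x i = q.
Proof.
move=> x0 xq; rewrite (bigD1 ord0) //=.
have -> : \sum_(i | i != ord0) fill_ord0 q x i = \sum_i x i.
  by rewrite [RHS](bigD1 ord0) //= x0; apply: eq_bigr => i /negbTE i0; rewrite /fill_ord0 i0.
by rewrite /fill_ord0 eqxx subnK.
Qed.

Lemma sum_d_fill_ord0 q (x : 'I_k -> nat) : \sum_i fill_ord0 q x i * d i = \sum_i x i * d i.
Proof.
apply: eq_bigr => i _; rewrite /fill_ord0; case: eqP => [->|//].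
by rewrite subnn !muln0.
Qed.

Lemma sum_w_fill_ord0 q (x : 'I_k -> nat) : x ord0 = 0 -> \sum_i x i <= q ->
  \sum_i fill_ord0 q x i * w i = e * q + \sum_i x i * d i.
Proof. by move=> x0 xq; rewrite sum_w_split sum_fill_ord0 // sum_d_fill_ord0. Qed.

Hypothesis s_additive : additive s.
Hypothesis blowup_full : forall b, in_monoid D b.

Lemma size_blowup_gens : size D = k.
Proof. by rewrite /= size_map. Qed.

Lemma small_blowup_decomp b : b < e ->
  exists2 x : 'I_k -> nat, x ord0 = 0 & \sum_i x i * d i = b.
Proof.
move=> be; have [x /eqP] := in_monoid_size size_blowup_gens (blowup_full b).
by rewrite sum_blowup_small // => /andP[/eqP x0 /eqP xb]; exists x.
Qed.

Lemma in_monoid_fill_ord0 q (x : 'I_k -> nat) : x ord0 = 0 -> \sum_i x i <= q ->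
  in_monoid s (e * q + \sum_i x i * d i).
Proof. by move=> x0 xq; exists (fill_ord0 q x); rewrite sum_w_fill_ord0. Qed.

Lemma in_monoidDe n : in_monoid s n -> in_monoid s (n + e).
Proof.
case=> x xn; exists (fun i => x i + (i == ord0)).
under eq_bigr do rewrite mulnDl.
rewrite big_split /= xn (bigD1 ord0) //= big1 ?mul1n ?addn0 // => i /negbTE -> //.
Qed.

Lemma ord_len_addn_mul n m : in_monoid s n ->
  in_monoid s (n + m * e) /\ ord_len s (n + m * e) = ord_len s n + m.
Proof.
move=> sn; elim: m => [|m [snm IH]]; first by rewrite !addn0.
by rewrite mulSn addnCA addnC; split; [apply: in_monoidDe | rewrite s_additive // IH addnS].
Qed.

Lemma flen_le_ord_len n (c : {ffun 'I_k -> 'I_n.+1}) :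
  c \in factorizations s n -> flen c <= ord_len s n.
Proof. exact: leq_bigmax_cond. Qed.

Lemma ord_len_le_div n : ord_len s n <= n %/ e.
Proof.
apply/bigmax_leqP => c /[!inE] /eqP cn; rewrite leq_divRL //.
by apply: leq_trans (eq_leq cn); rewrite sum_w_split mulnC leq_addr.
Qed.

(* With r = n mod e written as a D-combination x, filling the e-coordinate of x
   gives a factorization of n + r e of length n div e + r; additivity then
   transfers the length back to n. *)
Lemma ord_len_div n : in_monoid s n -> ord_len s n = n %/ e.
Proof.
move=> sn; apply/eqP; rewrite eqn_leq ord_len_le_div /=.
have [x x0 xr] := small_blowup_decomp (ltn_pmod n e_gt0).
set q := n %/ e; set r := n %% e.
have xqr : \sum_i x i <= q + r by rewrite (leq_trans (sum_le_sum_d x0)) // xr leq_addl.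
rewrite -(leq_add2r r); have [_ <-] := ord_len_addn_mul r sn.
have yn : \sum_i fill_ord0 (q + r) x i * w i = n + r * e.
  by rewrite sum_w_fill_ord0 // xr {2}(divn_eq n e) -/q -/r; lia.
have := flen_le_ord_len (coef_ffun_in w_gt0 yn).
by rewrite /flen (eq_bigr _ (fun i _ => coef_ffunE w_gt0 i yn)) sum_fill_ord0.
Qed.

Lemma sum_d_max_factorization n (c : {ffun 'I_k -> 'I_n.+1}) : in_monoid s n ->
  c \in [set c in factorizations s n | flen c == ord_len s n] ->
  \sum_i (c i : nat) * d i = n %% e.
Proof.
move=> sn /[!inE] /andP[/eqP cn /eqP]; rewrite ord_len_div // => clen.
by apply/eqP; rewrite -(eqn_add2l (e * flen c)) -sum_w_split cn clen mulnC -divn_eq.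
Qed.

Lemma in_small_blowup_factorizations b (x : {ffun 'I_k -> 'I_b.+1}) : b < e ->
  x \in wfactorizations k (nth 0 D) b -> x ord0 = 0 :> nat /\ \sum_i (x i : nat) * d i = b.
Proof. by move=> be; rewrite inE sum_blowup_small // => /andP[/eqP ? /eqP]. Qed.

(* Dropping the e-coordinate of a maximal factorization of n leaves a D-combination
   of n mod e; padding it by a fixed D-combination of the difference gives one of
   e - 1, injectively. *)
Lemma dmax_n_le n : in_monoid s n -> dmax_n s n <= d_count D e.-1.
Proof.
move=> sn; rewrite /dmax_n /d_count (card_factorizations_size _ size_blowup_gens).
set M := [set c in _ | _]; set r := n %% e.
have re : r <= e.-1 by rewrite -ltnS prednK // ltn_pmod.
have e1e : e.-1 < e by rewrite ltn_predL.
have [p p0 pr] := @small_blowup_decomp (e.-1 - r) (leq_ltn_trans (leq_subr _ _) e1e).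
pose pad (c : {ffun 'I_k -> 'I_n.+1}) i := (if i == ord0 then 0 else c i : nat) + p i.
have pad_sum c : c \in M -> \sum_i pad c i * nth 0 D i = e.-1.
  move=> cM; apply/eqP; rewrite sum_blowup_small // /pad eqxx p0 /=.
  have cr : \sum_i (c i : nat) * d i = r := sum_d_max_factorization sn cM.
  rewrite -(subnKC re) -{1}cr -pr -big_split /=.
  apply/eqP/eq_bigr => i _; rewrite mulnDl; case: eqP => [->|//].
  by rewrite subnn !muln0.
apply: (@leq_card_in_map _ _ _ _ (fun c => coef_ffun e.-1 (pad c))).
  by move=> c cM; apply: coef_ffun_in (pad_sum c cM); apply: blowup_weights_gt0.
move=> c1 c2 c1M c2M /(coef_ffun_inj blowup_weights_gt0 (pad_sum _ c1M) (pad_sum _ c2M)) pad12.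
apply: ffun_eq_off_ord0 => [i /negbTE i0|].
  by apply/eqP; rewrite -(eqn_add2r (p i)); have := pad12 i; rewrite /pad i0 => ->.
by move: c1M c2M; rewrite !inE => /andP[_ /eqP ->] /andP[_ /eqP ->].
Qed.

Lemma in_monoid_pred_sq : in_monoid s (e * e.-1 + e.-1).
Proof.
have [p p0 pe] := @small_blowup_decomp e.-1 ltac:(by rewrite ltn_predL).
by rewrite -{2}pe; apply: in_monoid_fill_ord0; rewrite // -pe sum_le_sum_d.
Qed.

(* A D-combination of e - 1 has length at most e - 1 = n div e, so filling its
   e-coordinate yields a maximal factorization of n. *)
Lemma dmax_n_pred_sq_ge : d_count D e.-1 <= dmax_n s (e * e.-1 + e.-1).
Proof.
rewrite /dmax_n /d_count (card_factorizations_size _ size_blowup_gens).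
set n := e * e.-1 + e.-1.
have e1e : e.-1 < e by rewrite ltn_predL.
have ord_n : ord_len s n = e.-1.
  by rewrite (ord_len_div in_monoid_pred_sq) /n mulnC divnMDl // divn_small ?addn0.
pose fill_x (x : {ffun 'I_k -> 'I_e.-1.+1}) := fill_ord0 e.-1 (fun i => x i : nat).
have fill_x_sum x : x \in wfactorizations k (nth 0 D) e.-1 ->
    \sum_i fill_x x i * w i = n /\ \sum_i fill_x x i = e.-1.
  move=> /(in_small_blowup_factorizations e1e) [x0 xd].
  have xe : \sum_i (x i : nat) <= e.-1 := leq_trans (sum_le_sum_d x0) (eq_leq xd).
  by rewrite sum_w_fill_ord0 // sum_fill_ord0 // xd.
apply: (@leq_card_in_map _ _ _ _ (fun x => coef_ffun n (fill_x x))).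
  move=> x /fill_x_sum [xn xlen]; rewrite inE; apply/andP; split.
    by have := coef_ffun_in w_gt0 xn.
  by rewrite ord_n /flen (eq_bigr _ (fun i _ => coef_ffunE w_gt0 i xn)) xlen.
move=> x1 x2 x1D x2D /(coef_ffun_inj w_gt0 (fill_x_sum _ x1D).1 (fill_x_sum _ x2D).1) fill12.
have [x10 _] := in_small_blowup_factorizations e1e x1D.
have [x20 _] := in_small_blowup_factorizations e1e x2D.
apply/ffunP => i; apply/val_inj => /=; case: (eqVneq i ord0) => [->|/negbTE i0].
  by rewrite x10 x20.
by have := fill12 i; rewrite /fill_x /fill_ord0 i0.
Qed.

End AdditiveWithFullBlowup.

Theorem proposition4p13 (s : seq nat) :
  numsg_mingens s -> additive s ->
  (forall n, in_monoid (blowup_gens s) n) ->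
  (exists2 n, in_monoid s n &
     dmax_n s n = d_count (blowup_gens s) (multiplicity s).-1) /\
  (forall n, in_monoid s n ->
     dmax_n s n <= d_count (blowup_gens s) (multiplicity s).-1).
Proof.
case=> sorted_s s_pos [F frob] _ s_add full.
case: s sorted_s s_pos frob s_add full => [|e A] sorted_s s_pos frob s_add full.
  by have [c] := frob F.+1 (leqnSn F); rewrite big_ord0.
have e_gt0 : 0 < e by rewrite lt0n; apply: contraNneq s_pos => <-; apply: mem_head.
have e_lt_A : all (ltn e) A := order_path_min ltn_trans sorted_s.
have dmax_le := dmax_n_le e_gt0 e_lt_A s_add full.
have pred_sqS := in_monoid_pred_sq e_gt0 e_lt_A full.
split=> //; exists (e * e.-1 + e.-1) => //.
by apply/eqP; rewrite eqn_leq dmax_le //= dmax_n_pred_sq_ge.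
Qed.
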